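(* Let $d\geq 7$ and let $f\in C^\infty([0,\infty))$ solve $$f''+\left(\frac{d-1}{y}-\frac{y}{2}\right)f'-\frac{d-1}{2y^2}\sin(2f)=0\quad (y>0)$$ with $f(0)=0$ and $f'(0)=a>0$. Let $h(y)=y^3f'(y)$. Then $h'(y)>0$ for all $y>0$, and $\lim_{y\to\infty}h(y)=+\infty$. *)

From Stdlib Require Import Reals.
Open Scope R_scope.

(* g' is the derivative of g at x relative to the set [0, +oo):
   two-sided at x > 0, right-sided at x = 0. *)
Definition has_deriv_nonneg (g g' : R -> R) (x : R) : Prop :=
  forall eps : R, 0 < eps -> exists delta : R, 0 < delta /\
    forall h : R, h <> 0 -> Rabs h < delta -> 0 <= x + h ->
      Rabs ((g (x + h) - g x) / h - g' x) < eps.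

(* D is the sequence of derivatives of f on [0, +oo), witnessing
   f \in C^\infty([0,+oo)): D 0 = f on [0,+oo) and each D (S n) is the
   derivative (within [0,+oo)) of D n at every point of [0,+oo).
   (Differentiability of all orders implies continuity of all derivatives.) *)
Definition smooth_nonneg_with (f : R -> R) (D : nat -> R -> R) : Prop :=
  (forall x, 0 <= x -> D 0%nat x = f x) /\
  (forall (n : nat) (x : R), 0 <= x -> has_deriv_nonneg (D n) (D (S n)) x).

(* With h = y^3 f', the equation gives
     h' = y^2 f' (y^2/2 - (d-4)) + (d-1)/2 * y sin (2f),
   and the weighted quantity h' * y^(d-5) e^(-y^2/4) has derivative
   y^(d-7) e^(-y^2/4) h (2(d-4) + (d-1) cos (2f)), whose last factor is at
   least d - 7 >= 0.  Near 0, h'/y^2 tends to -a(d-4) + (d-1)a = 3a > 0.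
   As long as h' > 0, h stays positive, so the weighted h' is nondecreasing
   and cannot reach 0; hence h' > 0 everywhere.  The weight is bounded, so
   h' is bounded below by a positive constant on [1, oo) and h grows at
   least linearly. *)

From Stdlib Require Import Reals Lra Psatz.
Open Scope R_scope.

Definition limit_right0 (g : R -> R) (l : R) : Prop :=
  forall eps : R, 0 < eps -> exists del : R, 0 < del /\
    forall y : R, 0 < y < del -> Rabs (g y - l) < eps.

Lemma derivable_pt_lim_of_has_deriv_nonneg (g g' : R -> R) (x : R) :
  0 < x -> has_deriv_nonneg g g' x -> derivable_pt_lim g x (g' x).
Proof.
  intros hx H eps heps. destruct (H eps heps) as [del [hdel Hh]].
  exists (mkposreal (Rmin del x) (Rmin_glb_lt _ _ _ hdel hx)).
  intros h hh0 hh. simpl in hh.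
  assert (Rabs h < del) by (eapply Rlt_le_trans; [exact hh | apply Rmin_l]).
  assert (Rabs h < x) by (eapply Rlt_le_trans; [exact hh | apply Rmin_r]).
  apply Hh; auto. apply Rabs_def2 in H1. lra.
Qed.

Lemma limit_right0_deriv_ratio (g g' : R -> R) :
  has_deriv_nonneg g g' 0 -> g 0 = 0 -> limit_right0 (fun y => g y / y) (g' 0).
Proof.
  intros H g0 eps heps. destruct (H eps heps) as [del [hdel Hh]].
  exists del; split; [exact hdel |]. intros y hy.
  specialize (Hh y). rewrite Rplus_0_l, g0, Rminus_0_r in Hh. apply Hh; try lra.
  rewrite Rabs_pos_eq; lra.
Qed.

(* A right derivative forces right continuity: [|g y - g 0| <= y (|g' 0| + 1)]. *)
Lemma limit_right0_of_has_deriv_nonneg (g g' : R -> R) :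
  has_deriv_nonneg g g' 0 -> limit_right0 g (g 0).
Proof.
  intros H eps heps.
  destruct (H 1 Rlt_0_1) as [del [hdel Hh]].
  set (B := Rabs (g' 0) + 1).
  assert (hB : 0 < B) by (unfold B; pose proof (Rabs_pos (g' 0)); lra).
  exists (Rmin del (eps / B)). split.
  { apply Rmin_glb_lt; [exact hdel | apply Rdiv_lt_0_compat; lra]. }
  intros y [hy0 hy].
  assert (hyd : y < del) by (eapply Rlt_le_trans; [exact hy | apply Rmin_l]).
  assert (hyB : y * B < eps).
  { assert (y < eps / B) by (eapply Rlt_le_trans; [exact hy | apply Rmin_r]).
    apply (Rmult_lt_compat_r B) in H0; [| exact hB].
    unfold Rdiv in H0. rewrite Rmult_assoc, Rinv_l in H0; lra. }
  specialize (Hh y ltac:(lra) ltac:(rewrite Rabs_pos_eq; lra) ltac:(lra)).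
  rewrite Rplus_0_l in Hh.
  set (q := (g y - g 0) / y) in Hh.
  assert (Eq : g y - g 0 = y * q) by (unfold q; field; lra).
  assert (Rabs q < B).
  { unfold B. pose proof (Rabs_triang_inv q (g' 0)). lra. }
  rewrite Eq, Rabs_mult, Rabs_pos_eq by lra.
  pose proof (Rabs_pos q). nra.
Qed.

Lemma sin_ge_cubic (x : R) : 0 <= x <= PI -> x - x ^ 3 / 6 <= sin x.
Proof.
  intros hx. destruct (SIN x) as [Hs _]; try lra.
  unfold sin_lb, sin_approx, sin_term in Hs. simpl in Hs.
  assert (x ^ 2 <= 16) by (pose proof PI_4; nra).
  assert (0 <= x ^ 5) by (apply pow_le; lra).
  simpl in *. nra.
Qed.

Lemma increment_ge_of_deriv_ge (g g' : R -> R) (x y k : R) :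
  x <= y ->
  (forall c, x <= c <= y -> derivable_pt_lim g c (g' c)) ->
  (forall c, x < c < y -> k <= g' c) ->
  g x + k * (y - x) <= g y.
Proof.
  intros [hxy | <-] hder hk; [| lra].
  destruct (MVT_cor2 g g' x y hxy hder) as [c [Hc Hcxy]].
  specialize (hk c Hcxy). nra.
Qed.

Lemma open_closed_induction_pos (g : R -> R) (a b : R) :
  (forall x, a <= x < b -> continuity_pt g x) ->
  0 < g a ->
  (forall s, a < s <= b -> (forall z, a <= z < s -> 0 < g z) -> 0 < g s) ->
  forall z, a <= z <= b -> 0 < g z.
Proof.
  intros hcont ha hstep z hz.
  set (E := fun x => a <= x <= b /\ forall w, a <= w <= x -> 0 < g w).
  assert (Ea : E a).
  { split; [lra |]. intros w hw. replace w with a by lra. exact ha. }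
  assert (Ebound : bound E) by (exists b; intros x [hx _]; lra).
  destruct (completeness E Ebound (ex_intro _ a Ea)) as [s [Hub Hlub]].
  assert (hs : a <= s <= b).
  { split; [apply Hub, Ea | apply Hlub; intros x [hx _]; lra]. }
  assert (below : forall w, a <= w < s -> 0 < g w).
  { intros w hw. apply Rnot_le_lt. intros hgw.
    assert (is_upper_bound E w).
    { intros x [hx Hx]. apply Rnot_lt_le. intros hwx.
      specialize (Hx w ltac:(lra)). lra. }
    specialize (Hlub w H). lra. }
  assert (gs : 0 < g s).
  { destruct (Req_dec s a) as [-> | hsa]; [exact ha |].
    apply hstep; [lra | exact below]. }
  assert (sb : s = b).
  { apply Rle_antisym; [lra |]. apply Rnot_lt_le. intros hsb.
    destruct (hcont s ltac:(lra) (g s) gs) as [del [hdel Hdel]].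
    set (x := Rmin (s + del / 2) b).
    assert (hx : s < x <= s + del / 2).
    { split; [apply Rmin_glb_lt; lra | apply Rmin_l]. }
    assert (Ex : E x).
    { split; [split; [lra | apply Rmin_r] |]. intros w hw.
      destruct (Rlt_le_dec w s) as [hws | hsw]; [apply below; lra |].
      destruct (Req_dec w s) as [-> | hws]; [exact gs |].
      assert (Hw : Rabs (g w - g s) < g s).
      { apply Hdel. split; [split; [exact I | auto] |].
        simpl; unfold Rdist. rewrite Rabs_pos_eq; lra. }
      apply Rabs_def2 in Hw. lra. }
    specialize (Hub x Ex). lra. }
  destruct (Rlt_le_dec z s) as [hzs | hsz]; [apply below; lra |].
  replace z with s by lra. exact gs.
Qed.

(* The closed form of h' with [s = f' y] and [r = f y / y] both within a/(4n)
   of their limit a; the tolerance must shrink with n because the limit 3a of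
   h'/y^2 comes from the cancellation -a(n-4) + (n-1)a. *)
Lemma dh_shape_pos (n a s r y : R) :
  7 <= n -> 0 < a -> 0 < y -> 4 * a * n * y <= 1 ->
  Rabs (s - a) < a / (4 * n) -> Rabs (r - a) < a / (4 * n) ->
  0 < y ^ 2 * s * (y ^ 2 / 2 - (n - 4)) + (n - 1) / 2 * (y * sin (2 * (r * y))).
Proof.
  intros hn ha hy hay hs hr.
  set (eta := a / (4 * n)) in *.
  assert (heta : eta * (4 * n) = a) by (unfold eta; field; lra).
  apply Rabs_def2 in hs as [hs1 hs2]. apply Rabs_def2 in hr as [hr1 hr2].
  assert (heta0 : 0 < eta) by (unfold eta; apply Rdiv_lt_0_compat; lra).
  assert (heta_a : eta < a / 4).
  { assert (eta * 4 < eta * (4 * n)) by (apply Rmult_lt_compat_l; lra). lra. }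
  set (x := 2 * (r * y)).
  assert (hx : 0 <= x <= 4 * a * y).
  { unfold x. split; [apply Rmult_le_pos; [lra | apply Rmult_le_pos; lra] |].
    assert (r * y <= 2 * a * y) by (apply Rmult_le_compat_r; lra). lra. }
  assert (hxn : x * n <= 1) by nra.
  assert (hsin : x * (1 - 1 / (6 * n)) <= sin x).
  { assert (hx1 : x <= 1) by nra.
    pose proof (sin_ge_cubic x ltac:(pose proof PI2_1; lra)).
    assert (x ^ 3 / 6 <= x * (1 / (6 * n))).
    { assert (x ^ 2 <= 1 / n).
      { apply (Rmult_le_reg_r n); [lra |]. unfold Rdiv. rewrite Rmult_1_l, Rinv_l by lra. nra. }
      unfold Rdiv in *. simpl. rewrite Rinv_mult. nra. }
    lra. }
  assert (hbr : 0 < - s * (n - 4) + (n - 1) * r * (1 - 1 / (6 * n))).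
  { set (t := 1 / (6 * n)).
    assert (ht : t * n = / 6) by (unfold t; field; lra).
    assert (ht0 : 0 < t) by (unfold t; apply Rdiv_lt_0_compat; lra).
    assert (ht1 : t < 1) by nra.
    assert (- s * (n - 4) >= - (a + eta) * (n - 4)) by nra.
    assert ((n - 1) * r * (1 - t) >= (n - 1) * (a - eta) * (1 - t)).
    { apply Rle_ge, Rmult_le_compat_r; [lra |]. apply Rmult_le_compat_l; lra. }
    assert ((n - 1) * (a - eta) * t <= a / 6) by nra.
    nra. }
  assert (y ^ 2 * s * (y ^ 2 / 2) >= 0) by (apply Rle_ge, Rmult_le_pos; nra).
  assert (y * sin x >= y * (x * (1 - 1 / (6 * n)))) by (apply Rle_ge, Rmult_le_compat_l; lra).
  assert (y * (x * (1 - 1 / (6 * n))) = y ^ 2 * (2 * r * (1 - 1 / (6 * n)))) by (unfold x; ring).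
  assert (0 < y ^ 2) by nra.
  assert (0 < y ^ 2 * (- s * (n - 4) + (n - 1) * r * (1 - 1 / (6 * n)))) by (apply Rmult_lt_0_compat; lra).
  nra.
Qed.

Lemma derivable_pt_lim_eq_val (g : R -> R) (x l l' : R) :
  derivable_pt_lim g x l -> l = l' -> derivable_pt_lim g x l'.
Proof. now intros H <-. Qed.

Ltac derive_tac :=
  repeat first
  [ apply derivable_pt_lim_plus | apply derivable_pt_lim_minus
  | apply derivable_pt_lim_mult | apply derivable_pt_lim_opp
  | apply derivable_pt_lim_const | apply derivable_pt_lim_id
  | apply derivable_pt_lim_pow | apply derivable_pt_lim_ln
  | match goal with
    | |- derivable_pt_lim (fun y => sin (@?g y)) _ _ =>
        apply (derivable_pt_lim_comp g sin); [| apply derivable_pt_lim_sin]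
    | |- derivable_pt_lim (fun y => exp (@?g y)) _ _ =>
        apply (derivable_pt_lim_comp g exp); [| apply derivable_pt_lim_exp]
    end
  | eassumption ].

Section ProfileEquation.

Variables (n : R) (u u' u'' : R -> R).
Hypothesis n_ge7 : 7 <= n.
Hypothesis u_deriv : forall y, 0 < y -> derivable_pt_lim u y (u' y).
Hypothesis u'_deriv : forall y, 0 < y -> derivable_pt_lim u' y (u'' y).
Hypothesis ode : forall y, 0 < y ->
  u'' y + ((n - 1) / y - y / 2) * u' y - (n - 1) / (2 * y ^ 2) * sin (2 * u y) = 0.

Definition h (y : R) : R := y ^ 3 * u' y.

Definition dh (y : R) : R :=
  y ^ 2 * u' y * (y ^ 2 / 2 - (n - 4)) + (n - 1) / 2 * (y * sin (2 * u y)).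

Definition weight (y : R) : R := exp ((n - 5) * ln y - y ^ 2 / 4).

Lemma u''_eq (y : R) : 0 < y ->
  u'' y = - ((n - 1) / y - y / 2) * u' y + (n - 1) / (2 * y ^ 2) * sin (2 * u y).
Proof. intros hy. specialize (ode y hy). lra. Qed.

Lemma h_derivative (y : R) : 0 < y -> derivable_pt_lim h y (dh y).
Proof.
  intros hy. specialize (u'_deriv y hy).
  eapply derivable_pt_lim_eq_val; [unfold h; derive_tac |].
  rewrite u''_eq by exact hy. unfold dh. simpl. field. lra.
Qed.

Lemma dh_continuous (y : R) : 0 < y -> continuity_pt dh y.
Proof.
  intros hy. specialize (u_deriv y hy). specialize (u'_deriv y hy).
  apply derivable_continuous_pt. eexists. unfold dh. derive_tac.
Qed.

Lemma weighted_dh_derivative (y : R) : 0 < y ->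
  derivable_pt_lim (fun z => dh z * weight z) y
    (weight y * (h y * (2 * (n - 4) + (n - 1) * cos (2 * u y)) / y ^ 2)).
Proof.
  intros hy. specialize (u_deriv y hy). specialize (u'_deriv y hy).
  unfold dh, weight, h. eapply derivable_pt_lim_eq_val; [derive_tac |].
  rewrite u''_eq by exact hy. simpl. field. lra.
Qed.

Lemma weight_pos (y : R) : 0 < weight y.
Proof. apply exp_pos. Qed.

Lemma weight_le (y : R) : 0 < y -> weight y <= exp ((n - 5) ^ 2).
Proof.
  intros hy. unfold weight.
  assert (hln : ln y <= y).
  { pose proof (exp_ineq1_le (ln y)) as H. rewrite exp_ln in H by exact hy. lra. }
  assert ((n - 5) * ln y <= (n - 5) * y) by (apply Rmult_le_compat_l; lra).
  assert (0 <= (y / 2 - (n - 5)) ^ 2) by apply pow2_ge_0.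
  assert (hle : (n - 5) * ln y - y ^ 2 / 4 <= (n - 5) ^ 2) by (simpl in *; nra).
  destruct hle as [hlt | ->]; [left; apply exp_increasing, hlt | apply Rle_refl].
Qed.

Lemma weighted_dh_le (x y : R) : 0 < x <= y ->
  (forall c, x < c < y -> 0 <= h c) -> dh x * weight x <= dh y * weight y.
Proof.
  intros [hx hxy] hh.
  assert (hder_nonneg : forall c, x < c < y ->
    0 <= weight c * (h c * (2 * (n - 4) + (n - 1) * cos (2 * u c)) / c ^ 2)).
  { intros c hc. apply Rmult_le_pos; [left; apply weight_pos |].
    unfold Rdiv. apply Rmult_le_pos.
    - apply Rmult_le_pos; [apply hh, hc |].
      pose proof (COS_bound (2 * u c)). nra.
    - left. apply Rinv_0_lt_compat, pow_lt. lra. }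
  pose proof (increment_ge_of_deriv_ge _ _ x y 0 hxy
    (fun c hc => weighted_dh_derivative c ltac:(lra)) hder_nonneg). lra.
Qed.

Lemma h_le (x y : R) : 0 < x <= y -> (forall c, x < c < y -> 0 <= dh c) -> h x <= h y.
Proof.
  intros [hx hxy] hK.
  pose proof (increment_ge_of_deriv_ge _ _ x y 0 hxy
    (fun c hc => h_derivative c ltac:(lra)) hK). lra.
Qed.

Lemma h_dh_pos :
  (exists ep, 0 < ep /\ forall y, 0 < y <= ep -> 0 < u' y /\ 0 < dh y) ->
  forall y, 0 < y -> 0 < h y /\ 0 < dh y.
Proof.
  intros [ep [hep Hnear]].
  assert (h_ep : 0 < h ep).
  { unfold h. apply Rmult_lt_0_compat; [apply pow_lt; lra | apply Hnear; lra]. }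
  assert (h_beyond : forall s, ep <= s -> (forall z, ep <= z < s -> 0 < dh z) ->
            forall c, ep <= c <= s -> 0 < h c).
  { intros s hs hK c hc. eapply Rlt_le_trans; [exact h_ep |].
    apply h_le; [lra |]. intros w hw. left. apply hK. lra. }
  assert (dh_beyond : forall z, ep <= z -> 0 < dh z).
  { intros z hz.
    apply (open_closed_induction_pos dh ep z); [| apply Hnear; lra | | lra].
    - intros x hx. apply dh_continuous. lra.
    - intros s hs hK.
      assert (dh ep * weight ep <= dh s * weight s).
      { apply weighted_dh_le; [lra |]. intros c hc. left.
        apply (h_beyond s); [lra | exact hK | lra]. }
      assert (0 < dh ep * weight ep).
      { apply Rmult_lt_0_compat; [apply Hnear; lra | apply weight_pos]. }
      pose proof (weight_pos s). nra. }
  intros y hy. destruct (Rle_lt_dec y ep) as [hle | hlt].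
  - split; [unfold h; apply Rmult_lt_0_compat; [apply pow_lt; lra |] |]; apply Hnear; lra.
  - split; [apply (h_beyond y) | apply dh_beyond]; try lra.
    intros z hz. apply dh_beyond. lra.
Qed.

Lemma dh_ge :
  (forall y, 0 < y -> 0 < h y /\ 0 < dh y) ->
  forall y, 1 <= y -> dh 1 * weight 1 / exp ((n - 5) ^ 2) <= dh y.
Proof.
  intros hpos y hy.
  assert (hm : dh 1 * weight 1 <= dh y * weight y).
  { apply weighted_dh_le; [lra |]. intros c hc. left. apply hpos. lra. }
  assert (hw : weight y <= exp ((n - 5) ^ 2)) by (apply weight_le; lra).
  assert (hK : 0 < dh y) by (apply hpos; lra).
  pose proof (exp_pos ((n - 5) ^ 2)).
  apply (Rmult_le_reg_r (exp ((n - 5) ^ 2))); [lra |].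
  unfold Rdiv. rewrite Rmult_assoc, Rinv_l, Rmult_1_r by lra.
  assert (dh y * weight y <= dh y * exp ((n - 5) ^ 2)) by (apply Rmult_le_compat_l; lra).
  lra.
Qed.

Lemma h_unbounded :
  (forall y, 0 < y -> 0 < h y /\ 0 < dh y) ->
  forall M, exists Y, forall y, Y <= y -> M < h y.
Proof.
  intros hpos M.
  set (k := dh 1 * weight 1 / exp ((n - 5) ^ 2)).
  assert (hk : 0 < k).
  { unfold k. apply Rdiv_lt_0_compat; [| apply exp_pos].
    apply Rmult_lt_0_compat; [apply hpos; lra | apply weight_pos]. }
  exists (1 + (Rabs M + Rabs (h 1) + 1) / k). intros y hy.
  assert (hY : 0 <= (Rabs M + Rabs (h 1) + 1) / k).
  { apply Rlt_le, Rdiv_lt_0_compat; [pose proof (Rabs_pos M); pose proof (Rabs_pos (h 1)); lra | exact hk]. }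
  assert (hinc : h 1 + k * (y - 1) <= h y).
  { apply (increment_ge_of_deriv_ge h dh); [lra | |].
    - intros c hc. apply h_derivative. lra.
    - intros c hc. apply dh_ge; [exact hpos | lra]. }
  assert (k * (y - 1) >= Rabs M + Rabs (h 1) + 1).
  { replace (Rabs M + Rabs (h 1) + 1) with (k * ((Rabs M + Rabs (h 1) + 1) / k)) by (field; lra).
    apply Rle_ge, Rmult_le_compat_l; lra. }
  pose proof (Rle_abs M). pose proof (Rle_abs (- h 1)). rewrite Rabs_Ropp in *. lra.
Qed.

Lemma dh_pos_near0 (a : R) : 0 < a ->
  limit_right0 (fun y => u y / y) a -> limit_right0 u' a ->
  exists ep, 0 < ep /\ forall y, 0 < y <= ep -> 0 < u' y /\ 0 < dh y.
Proof.
  intros ha hratio hslope.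
  set (eta := a / (4 * n)).
  assert (heta : 0 < eta) by (unfold eta; apply Rdiv_lt_0_compat; lra).
  destruct (hratio eta heta) as [d1 [hd1 Hr]].
  destruct (hslope eta heta) as [d2 [hd2 Hs]].
  assert (hd3 : 0 < / (4 * a * n)) by (apply Rinv_0_lt_compat; nra).
  exists (Rmin (d1 / 2) (Rmin (d2 / 2) (/ (4 * a * n)))). split.
  { repeat apply Rmin_glb_lt; lra. }
  intros y [hy hyep].
  pose proof (Rmin_l (d1 / 2) (Rmin (d2 / 2) (/ (4 * a * n)))).
  pose proof (Rmin_r (d1 / 2) (Rmin (d2 / 2) (/ (4 * a * n)))).
  pose proof (Rmin_l (d2 / 2) (/ (4 * a * n))).
  pose proof (Rmin_r (d2 / 2) (/ (4 * a * n))).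
  specialize (Hr y ltac:(lra)). specialize (Hs y ltac:(lra)).
  split.
  - apply Rabs_def2 in Hs.
    assert (eta * (4 * n) = a) by (unfold eta; field; lra).
    nra.
  - unfold dh. replace (u y) with (u y / y * y) by (field; lra).
    apply dh_shape_pos with a; try assumption.
    apply (Rmult_le_reg_r (/ (4 * a * n))); [exact hd3 |].
    rewrite Rmult_1_l. replace (4 * a * n * y * / (4 * a * n)) with y by (field; nra).
    lra.
Qed.

End ProfileEquation.

Theorem mainTheorem4 (d : nat) (f : R -> R) (D : nat -> R -> R) (a : R)
  (hd : (7 <= d)%nat)
  (hsmooth : smooth_nonneg_with f D)
  (hode : forall y : R, 0 < y ->
     D 2%nat y + ((INR d - 1) / y - y / 2) * D 1%nat y
       - (INR d - 1) / (2 * y ^ 2) * sin (2 * f y) = 0)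
  (hf0 : f 0 = 0)
  (hf'0 : D 1%nat 0 = a)
  (ha : 0 < a) :
  (forall y : R, 0 < y ->
     exists l : R, derivable_pt_lim (fun z => z ^ 3 * D 1%nat z) y l /\ 0 < l) /\
  (forall M : R, exists Y : R, forall y : R, Y <= y -> M < y ^ 3 * D 1%nat y).
Proof.
  destruct hsmooth as [hD0 hDS].
  assert (hn : 7 <= INR d) by (replace 7 with (INR 7) by (simpl; ring); now apply le_INR).
  assert (hderiv : forall k y, 0 < y -> derivable_pt_lim (D k) y (D (S k) y))
    by (intros k y hy; apply derivable_pt_lim_of_has_deriv_nonneg, hDS; lra).
  assert (hode' : forall y, 0 < y -> D 2%nat y + ((INR d - 1) / y - y / 2) * D 1%nat y
       - (INR d - 1) / (2 * y ^ 2) * sin (2 * D 0%nat y) = 0)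
    by (intros y hy; rewrite hD0 by lra; now apply hode).
  assert (hratio : limit_right0 (fun y => D 0%nat y / y) a).
  { rewrite <- hf'0. apply limit_right0_deriv_ratio; [apply hDS; lra |].
    rewrite hD0 by lra. exact hf0. }
  assert (hslope : limit_right0 (D 1%nat) a).
  { rewrite <- hf'0. apply limit_right0_of_has_deriv_nonneg with (D 2%nat), hDS. lra. }
  pose proof (h_dh_pos _ _ _ _ hn (hderiv 0%nat) (hderiv 1%nat) hode'
    (dh_pos_near0 _ _ _ hn a ha hratio hslope)) as hpos.
  split.
  - intros y hy. exists (dh (INR d) (D 0%nat) (D 1%nat) y).
    split; [exact (h_derivative _ _ _ _ (hderiv 1%nat) hode' y hy) | apply hpos, hy].
  - exact (h_unbounded _ _ _ _ hn (hderiv 0%nat) (hderiv 1%nat) hode' hpos).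
Qed.
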